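(* Let $G$ and $H$ be finite sequences of non-negative integers, each having at least one nonzero entry, with $\langle G\rangle=\langle H\rangle$. Then some permutation of $G$ is telescopic if and only if some permutation of $H$ is telescopic.
   Context: For a finite sequence $G=(g_1,\dots,g_k)\in\mathbb{N}_0^k$, $\langle G\rangle$ is the set of $\mathbb{N}_0$-linear combinations of its entries. With $G_i=(g_1,\dots,g_i)$ and $d_i=\gcd(G_i)$, for $G$ with $g_1>0$ if $k=1$ and $g_1+g_2>0$ if $k\ge2$, set $c_j=d_{j-1}/d_j$ ($2\le j\le k$); $G$ is telescopic if $c_jg_j\in\langle G_{j-1}\rangle$ for all $2\le j\le k$. A permutation of $G$ is $(g_{\sigma(1)},\dots,g_{\sigma(k)})$ for $\sigma$ in the symmetric group on $k$ letters. *)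

From mathcomp Require Import all_boot.
Set Implicit Arguments. Unset Strict Implicit. Unset Printing Implicit Defensive.

Definition in_sg (G : seq nat) (n : nat) : Prop :=
  exists c : seq nat, size c = size G /\
    n = \sum_(i < size G) nth 0 c i * nth 0 G i.

Definition dpre (G : seq nat) (i : nat) : nat :=
  \big[gcdn/0]_(x <- take i G) x.

(* Standing well-definedness condition: g_1 > 0 if k = 1, g_1 + g_2 > 0 if k >= 2. *)
Definition tele_cond (G : seq nat) : Prop :=
  (size G = 1 /\ 0 < nth 0 G 0) \/ (2 <= size G /\ 0 < nth 0 G 0 + nth 0 G 1).

(* G is telescopic: c_j g_j in <G_{j-1}> for 2 <= j <= k, with c_j = d_{j-1}/d_j.
   (1-based index j corresponds to nth 0 G (j-1).) *)
Definition telescopic (G : seq nat) : Prop :=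
  tele_cond G /\
  forall j, 2 <= j <= size G ->
    in_sg (take j.-1 G) ((dpre G j.-1 %/ dpre G j) * nth 0 G j.-1).

From mathcomp Require Import all_boot all_order zify.
From Stdlib Require Import Classical.
Set Implicit Arguments. Unset Strict Implicit. Unset Printing Implicit Defensive.

(* Call [T] saturated when every prefix [P] of [T] generates exactly the elements of
   [<T>] divisible by [gcd P]; under [tele_cond] this is equivalent to being
   telescopic. Saturation survives dropping a generator that is redundant modulo its
   predecessors. If instead [x] becomes redundant only thanks to a later [y], then
   [x = lcm (gcd of the prefix ending at x, y)], and moving [y] into the place of [x]
   keeps saturation. Iterating, a telescopic permutation of [G] yields a saturated
   sequence [M] of minimal generators of [<G> = <H>]; they all occur in [H], and
   appending the remaining entries of [H] to [M] keeps it saturated. *)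

Fixpoint sgr (L : seq nat) (n : nat) : Prop :=
  if L is x :: L' then exists a m, sgr L' m /\ n = a * x + m else n = 0.

Lemma in_sgE L n : in_sg L n <-> sgr L n.
Proof.
rewrite /in_sg; elim: L n => [|x L IH] n /=.
  split; first by move=> [c [_ ->]]; rewrite big_ord0.
  by move=> ->; exists [::]; rewrite big_ord0.
split.
  move=> [[|a c] [//= [Hs] ->]]; rewrite big_ord_recl /=.
  exists a, (\sum_(i < size L) nth 0 c i * nth 0 L i); split; last first.
    by congr (_ + _); apply: eq_bigr => i _; rewrite lift0.
  by apply/IH; exists c.
move=> [a [m [/IH [c [Hs ->]] ->]]]; exists (a :: c); split; first by rewrite /= Hs.
by rewrite big_ord_recl /=; congr (_ + _); apply: eq_bigr => i _; rewrite lift0.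
Qed.

Lemma sgr0 L : sgr L 0.
Proof. by elim: L => //= x L IH; exists 0, 0. Qed.

Lemma sgrD L a b : sgr L a -> sgr L b -> sgr L (a + b).
Proof.
elim: L a b => [|x L IH] a b /=; first by move=> -> ->.
move=> [a1 [m1 [H1 ->]]] [a2 [m2 [H2 ->]]]; exists (a1 + a2), (m1 + m2).
by split; [exact: IH | rewrite mulnDl -!addnA (addnCA m1)].
Qed.

Lemma sgrM L k a : sgr L a -> sgr L (k * a).
Proof. by move=> Ha; elim: k => [|k IH]; [exact: sgr0 | rewrite mulSn; apply: sgrD]. Qed.

Lemma sgr_mem L x : x \in L -> sgr L x.
Proof.
elim: L => //= y L IH; rewrite inE => /predU1P [->|/IH Hx]; last by exists 0, x.
by exists 1, 0; rewrite mul1n addn0; split; [exact: sgr0 |].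
Qed.

Lemma sgr_trans L L' : (forall x, x \in L -> sgr L' x) -> forall n, sgr L n -> sgr L' n.
Proof.
elim: L => [|x L IH] HL n /=; first by move=> ->; exact: sgr0.
move=> [a [m [Hm ->]]]; apply: sgrD; first exact/sgrM/HL/mem_head.
by apply: IH Hm => y Hy; apply: HL; rewrite inE Hy orbT.
Qed.

Lemma sgr_subset L L' n : {subset L <= L'} -> sgr L n -> sgr L' n.
Proof. by move=> sLL'; apply: sgr_trans => y /sLL' /sgr_mem. Qed.

Lemma sgr_eq_mem L L' : L =i L' -> forall n, sgr L n <-> sgr L' n.
Proof. by move=> EL n; split; apply: sgr_subset => z; rewrite EL. Qed.

Lemma sgr_perm L L' : perm_eq L L' -> forall n, sgr L n <-> sgr L' n.
Proof. by move/perm_mem; apply: sgr_eq_mem. Qed.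

Lemma sgr_cat_prefix A B n : sgr A n -> sgr (A ++ B) n.
Proof. by apply: sgr_subset => z Hz; rewrite mem_cat Hz. Qed.

Lemma sgr_cat_cons A x B n :
  sgr (A ++ x :: B) n <-> exists a m, sgr (A ++ B) m /\ n = a * x + m.
Proof.
have P : perm_eq (A ++ x :: B) (x :: A ++ B) by rewrite -cat1s perm_catCA.
by rewrite (sgr_perm P).
Qed.

Lemma sgr_insert A x B : sgr (A ++ B) x ->
  forall n, sgr (A ++ x :: B) n <-> sgr (A ++ B) n.
Proof.
move=> Hx n; split; first by move/sgr_cat_cons => [a [m [Hm ->]]]; apply/sgrD/Hm/sgrM.
by apply: sgr_subset => z; rewrite !mem_cat inE => /orP [->|->]; rewrite ?orbT.
Qed.

Lemma sgr_filter_le L n : sgr L n -> sgr [seq z <- L | z <= n] n.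
Proof.
elim: L n => [|h L IH] n //= [a [m [Hm En]]].
have Hm' : sgr [seq z <- L | z <= n] m.
  apply: sgr_subset (IH _ Hm) => z; rewrite !mem_filter => /andP [zm ->].
  by rewrite (leq_trans zm) // En leq_addl.
case: leqP => Hh; first by exists a, m.
case: a En => [|a] En; first by move: Hm'; rewrite En mul0n add0n.
by move: Hh; rewrite En mulSn -addnA ltnNge leq_addr.
Qed.

Definition gcds (L : seq nat) : nat := \big[gcdn/0]_(x <- L) x.

Lemma dpreE G i : dpre G i = gcds (take i G).
Proof. by []. Qed.

Lemma gcds_cons x L : gcds (x :: L) = gcdn x (gcds L).
Proof. exact: big_cons. Qed.

Lemma gcds_cat A B : gcds (A ++ B) = gcdn (gcds A) (gcds B).
Proof. exact: big_cat. Qed.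

Lemma gcds1 x : gcds [:: x] = x.
Proof. by rewrite gcds_cons /gcds big_nil gcdn0. Qed.

Lemma dvdn_gcds_sgr L n : sgr L n -> gcds L %| n.
Proof.
elim: L n => [|x L IH] n /=; first by move=> ->; rewrite dvdn0.
move=> [a [m [Hm ->]]]; rewrite gcds_cons; apply: dvdn_add.
  exact/dvdn_mull/dvdn_gcdl.
exact: dvdn_trans (dvdn_gcdr _ _) (IH _ Hm).
Qed.

Lemma dvdn_gcds d L : (forall x, x \in L -> d %| x) -> d %| gcds L.
Proof.
elim: L => [|x L IH] HL; first by rewrite /gcds big_nil dvdn0.
rewrite gcds_cons dvdn_gcd HL ?mem_head //= IH // => y Hy.
by apply: HL; rewrite inE Hy orbT.
Qed.

Lemma gcds_sgr_eq L L' : (forall n, sgr L n <-> sgr L' n) -> gcds L = gcds L'.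
Proof.
move=> EL; apply/eqP; rewrite eqn_dvd; apply/andP; split; apply: dvdn_gcds => x Hx;
  apply/dvdn_gcds_sgr/EL/sgr_mem; exact: Hx.
Qed.

Lemma lcmn_div_gcdn D y : D %/ gcdn D y * y = lcmn D y.
Proof. by rewrite /lcmn divn_mulAC ?dvdn_gcdl. Qed.

Lemma dvdn_div_gcdn D y a : 0 < gcdn D y -> D %| a * y -> D %/ gcdn D y %| a.
Proof.
move=> g_gt0 Day.
have Dag : D %| a * gcdn D y by rewrite muln_gcdr dvdn_gcd dvdn_mull.
by rewrite -(dvdn_pmul2r g_gt0) divnK ?dvdn_gcdl.
Qed.

(* [d = gcd (lcm D y) d = lcm (gcd D d) (gcd y d) = lcm D (gcd d y)], by
   distributivity of the divisibility lattice. *)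
Lemma dvdn_lcm_sandwich D d y s :
  D %| d -> d %| lcmn D y -> D %| s -> gcdn d y %| s -> d %| s.
Proof.
move=> Dd d_lcm Ds dys.
have E : gcdn (lcmn D y) d = lcmn (gcdn D d) (gcdn y d) := Order.NatDvd.meetUl _ _ _.
move: E; rewrite (gcdn_idPr d_lcm) (gcdn_idPl Dd) => ->.
by rewrite dvdn_lcm Ds gcdnC dys.
Qed.

(* [c_j g_j = lcm (d_(j-1), g_j)], since [d_j = gcd (d_(j-1), g_j)]. *)
Lemma telescopicE T : telescopic T <->
  tele_cond T /\ forall W y Z, T = W ++ y :: Z -> sgr W (lcmn (gcds W) y).
Proof.
rewrite /telescopic; split=> -[Hc Ht]; split=> //;
  [move=> W y Z ET | move=> j /andP [j2 jT]].
  have [-> | W0] := eqVneq W [::]; first by rewrite /gcds big_nil lcm0n.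
  have Hj : 2 <= (size W).+1 <= size T.
    by rewrite ET size_cat /= ltnS lt0n size_eq0 W0 addnS ltnS leq_addr.
  have Ty : take (size W).+1 T = W ++ [:: y].
    by rewrite ET -cat1s catA take_size_cat // size_cat addn1.
  have Wy : nth 0 T (size W) = y by rewrite ET nth_cat ltnn subnn.
  move: (Ht _ Hj); rewrite in_sgE !dpreE /= Ty Wy ET take_size_cat //.
  by rewrite gcds_cat gcds1 lcmn_div_gcdn.
have j_gt0 : 0 < j by apply: leq_trans j2.
have Hi : j.-1 < size T by rewrite prednK.
have ET : T = take j.-1 T ++ nth 0 T j.-1 :: drop j T.
  by rewrite -[in drop _ _](prednK j_gt0) -drop_nth // cat_take_drop.
rewrite in_sgE !dpreE -[in take j _](prednK j_gt0) (take_nth 0 Hi) -cats1 gcds_cat gcds1.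
by rewrite lcmn_div_gcdn; apply: Ht ET.
Qed.

Lemma sgr_rcons_lcm W y n : sgr W (lcmn (gcds W) y) ->
  sgr (rcons W y) n -> gcds W %| n -> sgr W n.
Proof.
move=> Hlcm Hn Hd; set D := gcds W in Hlcm Hd.
have [D0 | D_gt0] := posnP D.
  by move: Hd; rewrite D0 dvd0n => /eqP ->; apply: sgr0.
move: Hn; rewrite -cats1 => /sgr_cat_cons [a [m [Hm En]]]; rewrite cats0 in Hm.
have Day : D %| a * y by move: Hd; rewrite En dvdn_addl // dvdn_gcds_sgr.
have g_gt0 : 0 < gcdn D y by rewrite gcdn_gt0 D_gt0.
have /dvdnP [k Ea] := dvdn_div_gcdn g_gt0 Day.
by rewrite En Ea -mulnA lcmn_div_gcdn; apply: sgrD (sgrM _ Hlcm) Hm.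
Qed.

Definition saturated (T : seq nat) : Prop :=
  forall P Q, T = P ++ Q -> forall n, sgr T n -> gcds P %| n -> sgr P n.

Lemma telescopic_saturated T : telescopic T -> saturated T.
Proof.
move=> /telescopicE [_ Ht] P Q ET n Hn Hd.
suff K Q1 Q2 : T = P ++ Q1 ++ Q2 -> sgr (P ++ Q1) n -> sgr P n.
  by apply: (K Q [::]); rewrite ?cats0 // -ET.
elim/last_ind: Q1 Q2 => [|Q1 y IH] Q2 E2; first by rewrite cats0.
have E2' : T = (P ++ Q1) ++ y :: Q2 by rewrite E2 -cats1 -!catA.
rewrite -rcons_cat => /sgr_rcons_lcm - /(_ (Ht _ _ _ E2')) Hn'.
apply: (IH (y :: Q2)); first by rewrite E2' -catA.
by apply: Hn'; rewrite gcds_cat; apply: dvdn_trans (dvdn_gcdl _ _) Hd.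
Qed.

Lemma saturated_lcm_mem W y Z : saturated (W ++ y :: Z) -> sgr W (lcmn (gcds W) y).
Proof.
move=> HT; apply: (HT W (y :: Z)) => //; last exact: dvdn_lcml.
by rewrite -lcmn_div_gcdn; apply/sgrM/sgr_mem; rewrite mem_cat mem_head orbT.
Qed.

Lemma saturated_telescopic T : tele_cond T -> saturated T -> telescopic T.
Proof.
move=> Hc HT; apply/telescopicE; split=> // W y Z ET.
by apply: (@saturated_lcm_mem _ _ Z); rewrite -ET.
Qed.

Lemma tele_cond_head T : 0 < nth 0 T 0 -> tele_cond T.
Proof.
by rewrite /tele_cond; case: T => [|a [|b T]] //= a_gt0; [left | right; rewrite ltn_addr].
Qed.

Lemma cat_eq_cat_cases (A B C D : seq nat) : A ++ B = C ++ D ->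
  (exists X, A = C ++ X /\ D = X ++ B) \/ (exists X, C = A ++ X /\ B = X ++ D).
Proof.
elim: A C => [|a A IH] [|c C] /= E.
- by right; exists [::].
- by right; exists (c :: C).
- by left; exists (a :: A).
- by case: E => -> /IH [[X [-> ->]] | [X [-> ->]]]; [left | right]; exists X.
Qed.

Lemma saturated_cat T R : saturated T -> (forall x, x \in R -> sgr T x) ->
  saturated (T ++ R).
Proof.
move=> HT HR P Q E n Hn Hd.
have HnT : sgr T n.
  by apply: sgr_trans Hn => y; rewrite mem_cat => /orP [/sgr_mem | /HR].
case: (cat_eq_cat_cases E) => [[X [EX _]] | [X [-> _]]]; first exact: HT EX n HnT Hd.
exact: sgr_cat_prefix.
Qed.

Lemma saturated_drop A x B : saturated (A ++ x :: B) -> sgr A x -> saturated (A ++ B).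
Proof.
move=> HT HA P Q E n Hn Hd.
have HnT : sgr (A ++ x :: B) n by apply/sgr_insert => //; exact: sgr_cat_prefix.
case: (cat_eq_cat_cases E) => [[X [EA _]] | [X [EP EB]]].
  by apply: (HT P (X ++ x :: B)) => //; rewrite EA -catA.
have EX := sgr_insert (sgr_cat_prefix X HA).
rewrite EP; apply/EX; apply: (HT (A ++ x :: X) Q) => //; first by rewrite EB -catA.
by rewrite (gcds_sgr_eq EX) -EP.
Qed.

Lemma split_first_mem A x B : ~ sgr A x -> sgr (A ++ B) x ->
  exists C y E, [/\ B = C ++ y :: E, ~ sgr (A ++ C) x & sgr (A ++ C ++ [:: y]) x].
Proof.
move=> HA; elim/last_ind: B => [|B z IH]; first by rewrite cats0.
move=> HBz; have [HB | HnB] := classic (sgr (A ++ B) x).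
  have [C [y [E [-> HnC HyC]]]] := IH HB.
  by exists C, y, (rcons E z); rewrite rcons_cat.
by exists B, z, [::]; split; rewrite ?cats1.
Qed.

Section Swap.

Variables (A C E : seq nat) (x y : nat).
Hypothesis sat : saturated (A ++ x :: C ++ y :: E).

(* Write [x = a y + s] and [lcm (gcds W) y = b x + s'] with [s, s'] in [<A ++ C>],
   where [W = A ++ x :: C]. Since [gcds W] divides [x] and [s], [lcm] divides [a y],
   so [x >= b x + s']; as [x] is not in [<A ++ C>], this forces [x = b x + s' = lcm]. *)
Lemma saturated_redundant_lcm :
  ~ sgr (A ++ C) x -> sgr (A ++ C ++ [:: y]) x -> x = lcmn (gcds (A ++ x :: C)) y.
Proof.
move=> HnC HyC; set W := A ++ x :: C; set D := gcds W.
have x_gt0 : 0 < x.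
  by rewrite lt0n; apply/eqP => x0; apply: HnC; rewrite x0; apply: sgr0.
have Dx : D %| x by apply/dvdn_gcds_sgr/sgr_mem; rewrite mem_cat mem_head orbT.
have g_gt0 : 0 < gcdn D y by rewrite gcdn_gt0 (dvdn_gt0 x_gt0 Dx).
have sAC_W m : sgr (A ++ C) m -> sgr W m.
  by apply: sgr_subset => z; rewrite !mem_cat inE => /orP [] ->; rewrite ?orbT.
move: HyC; rewrite catA => /sgr_cat_cons [a [s [Hs Ex]]]; rewrite cats0 in Hs.
have Day : D %| a * y by move: Dx; rewrite Ex dvdn_addl // (dvdn_gcds_sgr (sAC_W _ Hs)).
have /dvdnP [a' Ea] := dvdn_div_gcdn g_gt0 Day.
have : sgr W (lcmn D y) by apply: (@saturated_lcm_mem W y E); rewrite /W -catA.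
rewrite {1}/W => /sgr_cat_cons [b [s' [Hs' El]]].
have Ex' : x = a' * (b * x + s') + s by rewrite {1}Ex Ea -mulnA lcmn_div_gcdn El.
have a'_gt0 : 0 < a'.
  by rewrite lt0n; apply/eqP => a0; apply: HnC; move: Ex'; rewrite a0 => ->.
have b_gt0 : 0 < b.
  rewrite lt0n; apply/eqP => b0; apply: HnC.
  by rewrite Ex' b0; apply/sgrD/Hs/sgrM.
have := leq_pmull (b * x + s') a'_gt0; have := leq_pmull x b_gt0.
rewrite El; lia.
Qed.

Hypothesis xE : x = lcmn (gcds (A ++ x :: C)) y.

Lemma sgr_lcm_of_mem L : y \in L -> sgr L x.
Proof. by move=> Hy; rewrite xE -lcmn_div_gcdn; apply/sgrM/sgr_mem. Qed.

Lemma sgr_swap E' n : sgr (A ++ y :: C ++ E') n <-> sgr (A ++ x :: C ++ y :: E') n.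
Proof.
rewrite (@sgr_insert A x (C ++ y :: E')); last first.
  by apply: sgr_lcm_of_mem; rewrite !(mem_cat, inE) eqxx !orbT.
by apply: sgr_perm; rewrite perm_cat2l -cat1s perm_catCA.
Qed.

Lemma saturated_swap_mid X X2 n : C = X ++ X2 ->
  sgr (A ++ x :: C ++ y :: E) n -> gcds (A ++ y :: X) %| n -> sgr (A ++ y :: X) n.
Proof.
move=> EC Hn Hd; set Q := A ++ x :: X; set W := A ++ x :: C.
have EP m : sgr (A ++ y :: X) m <-> sgr (y :: Q) m.
  rewrite -(@sgr_insert A x (y :: X)); last first.
    by apply: sgr_lcm_of_mem; rewrite !(mem_cat, inE) eqxx !orbT.
  apply: sgr_eq_mem => z; rewrite !(mem_cat, inE).
  by case: (z \in A); case: (z == x); case: (z == y).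
have EW : W = Q ++ X2 by rewrite /W /Q EC -catA.
have ET : A ++ x :: C ++ y :: E = W ++ y :: E by rewrite /W -catA.
have WQ : gcds W %| gcds Q by rewrite EW gcds_cat dvdn_gcdl.
have gP : gcds (A ++ y :: X) = gcdn y (gcds Q) by rewrite (gcds_sgr_eq EP) gcds_cons.
have : sgr (rcons W y) n.
  apply: (@sat (rcons W y) E) => //; first by rewrite ET cat_rcons.
  rewrite -cats1 gcds_cat gcds1; apply: dvdn_trans Hd.
  by rewrite gP dvdn_gcd dvdn_gcdr (dvdn_trans (dvdn_gcdl _ _)).
rewrite -cats1 => /sgr_cat_cons [a [s [Hs En]]]; rewrite cats0 in Hs.
have Qs : gcds Q %| s.
  apply: (dvdn_lcm_sandwich (D := gcds W) (y := y)) => //.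
  - by rewrite -xE; apply/dvdn_gcds_sgr/sgr_mem; rewrite mem_cat mem_head orbT.
  - exact: dvdn_gcds_sgr.
  - by move: Hd; rewrite gP En gcdnC dvdn_addr // dvdn_mull // dvdn_gcdr.
have HsQ : sgr Q s.
  apply: (@sat Q (X2 ++ y :: E)) => //; first by rewrite ET EW -!catA.
  by rewrite ET; apply: sgr_cat_prefix.
by apply/EP; exists a, s.
Qed.

Lemma saturated_swap : saturated (A ++ y :: C ++ E).
Proof.
move=> P Q EP n Hn; have HnT := (sgr_swap E n).1 Hn.
case: (cat_eq_cat_cases EP) => [[X [EA _]] | [[|z X] [-> EC]]].
- by apply: (@sat P (X ++ x :: C ++ y :: E)) => //; rewrite EA -catA.
- by rewrite cats0; apply: (@sat A (x :: C ++ y :: E)).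
case: EC => <- {z} EC.
case: (cat_eq_cat_cases EC) => [[X2 [EC' _]] | [X3 [-> EE]]].
  exact: saturated_swap_mid EC' HnT.
rewrite (gcds_sgr_eq (sgr_swap X3)) => Hd; apply/sgr_swap.
by apply: (@sat _ Q) => //; rewrite EE -catA /= -catA.
Qed.

End Swap.

Lemma saturated_shrink A x B : saturated (A ++ x :: B) -> sgr (A ++ B) x ->
  exists T, [/\ saturated T, size T < size (A ++ x :: B)
             & forall n, sgr T n <-> sgr (A ++ x :: B) n].
Proof.
move=> HT Hx; have [HA | HnA] := classic (sgr A x).
  exists (A ++ B); split; first exact: saturated_drop HT HA.
    by rewrite !size_cat addnS.
  by move=> n; rewrite sgr_insert.
have [C [y [E [EB HnC HyC]]]] := split_first_mem HnA Hx; rewrite EB in HT *.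
have xE := saturated_redundant_lcm HT HnC HyC.
exists (A ++ y :: C ++ E); split; [exact: saturated_swap HT xE | | exact: sgr_swap xE E].
by rewrite !size_cat /= !size_cat /=; lia.
Qed.

Definition irredundant (M : seq nat) : Prop :=
  forall A x B, M = A ++ x :: B -> ~ sgr (A ++ B) x.

Lemma saturated_irredundant T : saturated T ->
  exists M, [/\ saturated M, irredundant M & forall n, sgr M n <-> sgr T n].
Proof.
have [k] := ubnP (size T); elim: k T => // k IH T /ltnSE sizeT HT.
have [HI | HnI] := classic (irredundant T); first by exists T.
have [A [x [B [ET Hx]]]] : exists A x B, T = A ++ x :: B /\ sgr (A ++ B) x.
  by apply: NNPP => Hn; apply: HnI => A x B ET Hx; apply: Hn; exists A, x, B.
rewrite ET in HT sizeT.
have [T' [HT' sizeT' ET']] := saturated_shrink HT Hx.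
have [M [HM HIM EM]] := IH T' (leq_trans sizeT' sizeT) HT'.
by exists M; split=> // n; rewrite EM ET' ET.
Qed.

Lemma irredundant_gt0 M x : irredundant M -> x \in M -> 0 < x.
Proof.
move=> HI Mx; case/splitPr: Mx HI => A B HI; rewrite lt0n; apply/eqP => x0.
by apply: (HI A x B erefl); rewrite x0; apply: sgr0.
Qed.

Lemma irredundant_uniq M : irredundant M -> uniq M.
Proof.
elim: M => //= x M IH HI; apply/andP; split.
  by apply/negP => Mx; apply: (HI [::] x M erefl); apply: sgr_mem.
apply: IH => A y B EM Hy; apply: (HI (x :: A) y B); first by rewrite EM.
by apply: sgr_subset Hy => z Hz; rewrite inE Hz orbT.
Qed.

(* An irredundant generating sequence consists of minimal generators: an element
   missing from [H] would be a combination of smaller elements of [H], hence of [M]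
   without itself. *)
Lemma irredundant_subset M H : irredundant M ->
  (forall n, sgr M n <-> sgr H n) -> {subset M <= H}.
Proof.
move=> HI EMH x Mx; apply/negPn/negP => Hx.
case/splitPr: Mx HI EMH => A B HI EMH; apply: (HI A x B erefl).
have := sgr_filter_le ((EMH x).1 (sgr_mem _)); rewrite mem_cat mem_head orbT => /(_ isT).
apply: sgr_trans => z; rewrite mem_filter => /andP [zx Hz].
have {}zx : z < x by rewrite ltn_neqAle zx andbT; apply: contraNneq Hx => <-.
have := sgr_filter_le ((EMH z).2 (sgr_mem Hz)).
apply: sgr_subset => w; rewrite mem_filter !mem_cat inE => /andP [wz].
by rewrite (ltn_eqF (leq_ltn_trans wz zx)).
Qed.

Lemma uniq_subset_perm_cat (M H : seq nat) : uniq M -> {subset M <= H} ->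
  exists R, perm_eq H (M ++ R).
Proof.
elim: M H => [|x M IH] H /=; first by exists H.
move=> /andP [xM uM] sMH.
have PH := perm_to_rem (sMH x (mem_head x M)).
have sM : {subset M <= rem x H}.
  move=> z Mz; have : z \in x :: rem x H by rewrite -(perm_mem PH) sMH // inE Mz orbT.
  by rewrite inE => /predU1P [zx | //]; rewrite -zx Mz in xM.
have [R PR] := IH _ uM sM; exists R.
by apply: perm_trans PH _; rewrite /= perm_cons.
Qed.

Lemma telescopic_perm_of_sgr_eq G H : has (fun x => 0 < x) H ->
  (forall n, in_sg G n <-> in_sg H n) ->
  (exists G', perm_eq G G' /\ telescopic G') -> exists H', perm_eq H H' /\ telescopic H'.
Proof.
move=> /hasP [h Hh h_gt0] EGH [G' [PG Ht]].
have [M [HM HI EM]] := saturated_irredundant (telescopic_saturated Ht).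
have EMH n : sgr M n <-> sgr H n by rewrite EM -(sgr_perm PG) -!in_sgE.
have [R PR] := uniq_subset_perm_cat (irredundant_uniq HI) (irredundant_subset HI EMH).
exists (M ++ R); split=> //; apply: saturated_telescopic.
  case: M {HM EM PR} HI EMH => [|m M] HI EMH.
    by have /= h0 := (EMH h).2 (sgr_mem Hh); rewrite h0 in h_gt0.
  by apply: tele_cond_head; apply: (irredundant_gt0 HI); apply: mem_head.
apply: saturated_cat => // z Rz; apply/EMH/sgr_mem.
by rewrite (perm_mem PR) mem_cat Rz orbT.
Qed.

Theorem mainTheorem3 (G H : seq nat) :
  has (fun x => 0 < x) G -> has (fun x => 0 < x) H ->
  (forall n, in_sg G n <-> in_sg H n) ->
  ((exists G', perm_eq G G' /\ telescopic G') <->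
   (exists H', perm_eq H H' /\ telescopic H')).
Proof.
move=> HG HH EGH; split; first exact: telescopic_perm_of_sgr_eq.
by apply: telescopic_perm_of_sgr_eq => // n; rewrite EGH.
Qed.
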